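(* Let $P$ be a well-ordered phaser and suppose $P\to Q$. Then $Q$ is well-ordered.
   Context: A view is a record $v=(\mathrm{sp}(v),\mathrm{wp}(v),\mathrm{mode}(v))$ with $\mathrm{sp}(v),\mathrm{wp}(v)\in\mathbb{N}$ and $\mathrm{mode}(v)\in\{\mathtt{SW},\mathtt{SO},\mathtt{WO}\}$. For a view or mode, $\mathrm{CanSignal}$ means the mode is $\mathtt{SW}$ or $\mathtt{SO}$, and $\mathrm{CanWait}$ means the mode is $\mathtt{SW}$ or $\mathtt{WO}$. A phaser (state) $P$ is a finite partial map from task identifiers to views; $t\in P$ means $t\in\mathrm{dom}\,P$. For views, $v_1\unrhd v_2$ (cannot-happen-before) iff $\mathrm{mode}(v_1)=\mathtt{WO}$ or $\mathrm{sp}(v_1)\ge\mathrm{wp}(v_2)$ or $\mathrm{mode}(v_2)=\mathtt{SO}$. For phasers, $P\unrhd Q$ iff $P(t)\unrhd Q(t')$ for all $t\in\mathrm{dom}\,P$, $t'\in\mathrm{dom}\,Q$. $P$ is well-ordered iff $P\unrhd P$. Reduction $P\to_t^{o}Q$ (task $t$ performs operation $o$) is defined by four rules. Signal: if $P(t)=v$, $\mathrm{CanSignal}(v)$, and ($\mathrm{mode}(v)=\mathtt{SW}\Rightarrow\mathrm{wp}(v)=\mathrm{sp}(v)$), then $Q=P[t\mapsto v']$ where $v'$ is $v$ with $\mathrm{sp}$ increased by 1. Wait: if $P(t)=v$, $\mathrm{CanWait}(v)$, ($\mathrm{mode}(v)=\mathtt{SW}\Rightarrow\mathrm{wp}(v)+1=\mathrm{sp}(v)$),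 and $\mathrm{Sync}(P,t)$, meaning that for every $t'\in\mathrm{dom}\,P$ with $\mathrm{CanSignal}(P(t'))$ we have $\mathrm{sp}(P(t'))>\mathrm{wp}(v)$, then $Q=P[t\mapsto v']$ where $v'$ is $v$ with $\mathrm{wp}$ increased by 1. Register$(t',r)$ with $r$ a mode: if $t'\notin\mathrm{dom}\,P$, $P(t)=v$, ($\mathrm{CanWait}(r)\Rightarrow\mathrm{CanWait}(v)$) and ($\mathrm{CanSignal}(r)\Rightarrow\mathrm{CanSignal}(v)$), then $Q=P[t'\mapsto(\mathrm{sp}(v),\mathrm{wp}(v),r)]$. Drop: if $t\in\mathrm{dom}\,P$, then $Q$ is $P$ with $t$ removed from its domain. $P\to Q$ means $P\to_t^{o}Q$ for some $t,o$. *)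

From Stdlib Require Import Arith List.

Inductive pmode := SW | SO | WO.

Record view := mkView { sp : nat; wp : nat; mode : pmode }.

Definition CanSignal (m : pmode) : Prop := m = SW \/ m = SO.
Definition CanWait (m : pmode) : Prop := m = SW \/ m = WO.

Definition tid := nat.

Record phaser := mkPhaser {
  pmap :> tid -> option view;
  pfinite : exists l : list tid, forall t v, pmap t = Some v -> In t l }.

Definition vchb (v1 v2 : view) : Prop :=
  mode v1 = WO \/ sp v1 >= wp v2 \/ mode v2 = SO.

Definition pchb (P Q : phaser) : Prop :=
  forall t t' v v', P t = Some v -> Q t' = Some v' -> vchb v v'.

Definition well_ordered (P : phaser) : Prop := pchb P P.

Definition Sync (P : phaser) (t : tid) : Prop :=
  forall t' v v', P t = Some v -> P t' = Some v' -> CanSignal (mode v') ->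
    sp v' > wp v.

Inductive op := Signal | Wait | Register (t' : tid) (r : pmode) | Drop.

Definition updated (P Q : phaser) (t : tid) (o : option view) : Prop :=
  Q t = o /\ forall u, u <> t -> Q u = P u.

Inductive reduces (P : phaser) (t : tid) : op -> phaser -> Prop :=
| red_signal : forall v Q,
    P t = Some v -> CanSignal (mode v) ->
    (mode v = SW -> wp v = sp v) ->
    updated P Q t (Some (mkView (S (sp v)) (wp v) (mode v))) ->
    reduces P t Signal Q
| red_wait : forall v Q,
    P t = Some v -> CanWait (mode v) ->
    (mode v = SW -> wp v + 1 = sp v) ->
    Sync P t ->
    updated P Q t (Some (mkView (sp v) (S (wp v)) (mode v))) ->
    reduces P t Wait Q
| red_register : forall t' r v Q,
    P t' = None -> P t = Some v ->
    (CanWait r -> CanWait (mode v)) ->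
    (CanSignal r -> CanSignal (mode v)) ->
    updated P Q t' (Some (mkView (sp v) (wp v) r)) ->
    reduces P t (Register t' r) Q
| red_drop : forall v Q,
    P t = Some v ->
    updated P Q t None ->
    reduces P t Drop Q.

Definition step (P Q : phaser) : Prop := exists t o, reduces P t o Q.

(** A step changes the view of a single task, so it suffices to compare the
    new view with itself and with the unchanged views of the other tasks.
    Signal only raises a signal phase and Register only weakens a mode, both
    of which preserve cannot-happen-before; Wait raises a wait phase, which
    is harmless because the guard [Sync] says every signaller is already
    ahead of it. *)
From Stdlib Require Import Arith Lia.

Lemma vchb_mono (v1 v2 w1 w2 : view) :
  vchb v1 v2 -> mode w1 = mode v1 -> mode w2 = mode v2 ->
  sp v1 <= sp w1 -> wp w2 <= wp v2 -> vchb w1 w2.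
Proof.
  unfold vchb; intros [Hm | [Hle | Hm]] -> -> H1 H2;
    [left | right; left; lia | right; right]; assumption.
Qed.

Lemma well_ordered_drop (P Q : phaser) (t : tid) :
  well_ordered P -> updated P Q t None -> well_ordered Q.
Proof.
  intros HP [HQt HQu] t1 t2 w1 w2 H1 H2.
  destruct (Nat.eq_dec t1 t) as [->|n1]; [congruence|].
  destruct (Nat.eq_dec t2 t) as [->|n2]; [congruence|].
  rewrite HQu in H1, H2 by assumption.
  exact (HP _ _ _ _ H1 H2).
Qed.

Lemma well_ordered_update (P Q : phaser) (t : tid) (w : view) :
  well_ordered P -> vchb w w ->
  (forall u x, u <> t -> P u = Some x -> vchb w x /\ vchb x w) ->
  updated P Q t (Some w) -> well_ordered Q.
Proof.
  intros HP Hww Hw [HQt HQu] t1 t2 w1 w2 H1 H2.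
  destruct (Nat.eq_dec t1 t) as [->|n1]; destruct (Nat.eq_dec t2 t) as [->|n2].
  - congruence.
  - rewrite HQt in H1; injection H1 as <-.
    rewrite HQu in H2 by assumption.
    exact (proj1 (Hw _ _ n2 H2)).
  - rewrite HQt in H2; injection H2 as <-.
    rewrite HQu in H1 by assumption.
    exact (proj2 (Hw _ _ n1 H1)).
  - rewrite HQu in H1, H2 by assumption.
    exact (HP _ _ _ _ H1 H2).
Qed.

Lemma well_ordered_signal (P Q : phaser) (t : tid) (v : view) :
  well_ordered P -> P t = Some v ->
  updated P Q t (Some (mkView (S (sp v)) (wp v) (mode v))) ->
  well_ordered Q.
Proof.
  intros HP Hv; apply (well_ordered_update P Q t _ HP).
  - apply (vchb_mono v v); simpl; auto.
    exact (HP _ _ _ _ Hv Hv).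
  - intros u x _ Hx; split.
    + apply (vchb_mono v x); simpl; auto.
      exact (HP _ _ _ _ Hv Hx).
    + apply (vchb_mono x v); simpl; auto.
      exact (HP _ _ _ _ Hx Hv).
Qed.

Lemma well_ordered_wait (P Q : phaser) (t : tid) (v : view) :
  well_ordered P -> P t = Some v -> CanWait (mode v) ->
  (mode v = SW -> wp v + 1 = sp v) -> Sync P t ->
  updated P Q t (Some (mkView (sp v) (S (wp v)) (mode v))) ->
  well_ordered Q.
Proof.
  intros HP Hv Hwait Hsw Hsync; apply (well_ordered_update P Q t _ HP).
  - unfold vchb; simpl.
    destruct Hwait as [Hm | Hm]; [right; left | left]; auto.
    specialize (Hsw Hm); lia.
  - intros u x _ Hx; split.
    + apply (vchb_mono v x); simpl; auto.
      exact (HP _ _ _ _ Hv Hx).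
    + unfold vchb; simpl.
      destruct (mode x) eqn:Hmx; [right; left .. | left; reflexivity];
        apply (Hsync _ _ _ Hv Hx); unfold CanSignal; auto.
Qed.

Lemma vchb_restrict_mode_l (v x : view) (r : pmode) :
  (CanSignal r -> CanSignal (mode v)) ->
  vchb v x -> vchb (mkView (sp v) (wp v) r) x.
Proof.
  unfold vchb, CanSignal; simpl; intros Hr [Hm | Hx]; [left | right; exact Hx].
  destruct r; [destruct Hr .. | reflexivity]; auto; congruence.
Qed.

Lemma vchb_restrict_mode_r (x v : view) (r : pmode) :
  (CanWait r -> CanWait (mode v)) ->
  vchb x v -> vchb x (mkView (sp v) (wp v) r).
Proof.
  unfold vchb, CanWait; simpl; intros Hr [Hx | [Hle | Hm]];
    [left; exact Hx | right; left; exact Hle | right; right].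
  destruct r; [destruct Hr | reflexivity | destruct Hr]; auto; congruence.
Qed.

Lemma well_ordered_register (P Q : phaser) (t t' : tid) (v : view) (r : pmode) :
  well_ordered P -> P t = Some v ->
  (CanWait r -> CanWait (mode v)) -> (CanSignal r -> CanSignal (mode v)) ->
  updated P Q t' (Some (mkView (sp v) (wp v) r)) ->
  well_ordered Q.
Proof.
  intros HP Hv Hw Hs; apply (well_ordered_update P Q t' _ HP).
  - apply vchb_restrict_mode_r, vchb_restrict_mode_l; auto.
    exact (HP _ _ _ _ Hv Hv).
  - intros u x _ Hx; split.
    + apply vchb_restrict_mode_l; auto.
      exact (HP _ _ _ _ Hv Hx).
    + apply vchb_restrict_mode_r; auto.
      exact (HP _ _ _ _ Hx Hv).
Qed.

Theorem lemma2 (P Q : phaser) :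
  well_ordered P -> step P Q -> well_ordered Q.
Proof.
  intros HP [t [o Hred]].
  destruct Hred as [v Q Hv _ _ HQ | v Q Hv Hw Hsw Hsync HQ
                   | t' r v Q _ Hv Hwr Hsr HQ | v Q _ HQ].
  - exact (well_ordered_signal P Q t v HP Hv HQ).
  - exact (well_ordered_wait P Q t v HP Hv Hw Hsw Hsync HQ).
  - exact (well_ordered_register P Q t t' v r HP Hv Hwr Hsr HQ).
  - exact (well_ordered_drop P Q t HP HQ).
Qed.
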